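(* Let $F$ and $G$ be groups. The map $\mathfrak{F}\colon O(F)\times O(G)\to O(F*G)$ sending $(<_F,<_G)$ to the ordering $\prec$ of $F*G$ described in the context is continuous and injective.
   Context: For a group $H$, $O(H)$ is the set of all orderings of $H$ (strict total orders invariant under left and right multiplication), with topology whose basic open sets are, for finite $S\subset H$, the sets of orderings in which all elements of $S$ exceed the identity. Construction of $\prec=\mathfrak{F}(<_F,<_G)$: order $F\times G$ lexicographically ($(f,g)<(f',g')$ iff $f<_Ff'$, or $f=f'$ and $g<_Gg'$); in $R=\mathbb{Z}(F\times G)$ call a nonzero element positive if the coefficient of its largest group element is a positive integer. Let $\rho\colon F*G\to M_2(R[t])$ be the injective homomorphism with $\rho(f)=\begin{pmatrix} f&(f-1)t\\0&1\end{pmatrix}$ ($f\in F$), $\rho(g)=\begin{pmatrix}1&0\\(g-1)t&g\end{pmatrix}$ ($g\in G$). Order the matrix positions $(1,1)$, $(2,2)$, then the off-diagonal positions in a fixed order. A nonzero $M=\sum_iM_it^i$ ($M_i\in M_2(R)$) is positive if for the least $n$ with $M_n\ne0$ the first nonzero entry of $M_n$ is positive in $R$. Set $x\prec y$ iff $\rho(y)-\rho(x)$ is positive. *)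

From Stdlib Require List.
From mathcomp Require Import all_boot all_algebra.

Set Implicit Arguments.
Unset Strict Implicit.
Unset Printing Implicit Defensive.

Import GRing.Theory Num.Theory.

Section Orderings.
Variables (T : Type) (mulT : T -> T -> T) (oneT : T).

Definition is_ordering (lt : T -> T -> Prop) : Prop :=
  [/\ (forall x, ~ lt x x),
      (forall x y z, lt x y -> lt y z -> lt x z),
      (forall x y, x <> y -> lt x y \/ lt y x),
      (forall x y z, lt x y -> lt (mulT z x) (mulT z y)) &
      (forall x y z, lt x y -> lt (mulT x z) (mulT y z))].

Definition ordering := {lt : T -> T -> Prop | is_ordering lt}.

Definition basic_open (S : seq T) : ordering -> Prop :=
  fun o => forall s, List.In s S -> proj1_sig o oneT s.

Definition ord_open (U : ordering -> Prop) : Prop :=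
  forall o, U o -> exists S : seq T,
    basic_open S o /\ (forall o', basic_open S o' -> U o').

End Orderings.

Definition prod_ord_open (T1 T2 : Type) (m1 : T1 -> T1 -> T1) (e1 : T1)
  (m2 : T2 -> T2 -> T2) (e2 : T2)
  (W : ordering m1 * ordering m2 -> Prop) : Prop :=
  forall p, W p -> exists (S1 : seq T1) (S2 : seq T2),
    basic_open e1 S1 p.1 /\ basic_open e2 S2 p.2 /\
    (forall q, basic_open e1 S1 q.1 -> basic_open e2 S2 q.2 -> W q).

Definition ord_continuous (T1 T2 T : Type) (m1 : T1 -> T1 -> T1) (e1 : T1)
  (m2 : T2 -> T2 -> T2) (e2 : T2) (m : T -> T -> T) (e : T)
  (phi : ordering m1 * ordering m2 -> ordering m) : Prop :=
  forall U : ordering m -> Prop, ord_open e U ->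
    prod_ord_open e1 e2 (fun p => U (phi p)).

Section FreeProduct.
Variables F G : groupType.

Definition letter := (F + G)%type.

Definition nontriv (a : letter) : bool :=
  match a with inl f => f != 1%g | inr g => g != 1%g end.

Definition side (a : letter) : bool := if a is inl _ then true else false.

Definition reduced (w : seq letter) : bool :=
  all nontriv w && sorted (fun a b => side a != side b) w.

Definition push (a : letter) (w : seq letter) : seq letter :=
  match a with
  | inl f =>
      if f == 1%g then w else
      match w with
      | inl f' :: w' => if (f * f')%g == 1%g then w' else inl (f * f')%g :: w'
      | _ => inl f :: w
      end
  | inr g =>
      if g == 1%g then w else
      match w with
      | inr g' :: w' => if (g * g')%g == 1%g then w' else inr (g * g')%g :: w'
      | _ => inr g :: w
      end
  end.

Lemma reduced_cons a w :
  reduced (a :: w) = nontriv a && reduced w &&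
    (if w is b :: _ then side a != side b else true).
Proof.
rewrite /reduced /=; case: w => [|b w] /=; first by rewrite !andbT.
by rewrite -!andbA; do !bool_congr.
Qed.

Lemma push_reduced a w : reduced w -> reduced (push a w).
Proof.
case: a => [f|g] /=.
- case: eqP => // /eqP nf.
  case: w => [|[f'|g'] w'] Hw; rewrite ?reduced_cons /= ?nf //.
  + move: Hw; rewrite reduced_cons => /andP[/andP[_ Hw'] Hs].
    case: eqP => [_|/eqP nff]; first by [].
    by rewrite reduced_cons /= nff Hw' /=; case: w' Hs Hw' => [|[]].
  + by move: Hw; rewrite reduced_cons /= => ->.
- case: eqP => // /eqP ng.
  case: w => [|[f'|g'] w'] Hw; rewrite ?reduced_cons /= ?ng //.
  + by move: Hw; rewrite reduced_cons /= => ->.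
  + move: Hw; rewrite reduced_cons => /andP[/andP[_ Hw'] Hs].
    case: eqP => [_|/eqP ngg]; first by [].
    by rewrite reduced_cons /= ngg Hw' /=; case: w' Hs Hw' => [|[]].
Qed.

Lemma foldr_push_reduced (u v : seq letter) :
  reduced v -> reduced (foldr push v u).
Proof. by elim: u => //= a u IH Hv; apply: push_reduced; apply: IH. Qed.

Definition freeprod := {w : seq letter | reduced w}.

Definition fp_one : freeprod := exist _ [::] isT.

Definition fp_mul (u v : freeprod) : freeprod :=
  exist _ (foldr push (proj1_sig v) (proj1_sig u))
    (foldr_push_reduced (proj1_sig u) (proj2_sig v)).

(* An element of R[t] is represented by a finite formal sum of terms        *)
(* c * (f,g) * t^n, given as a list of (c, (f,g), n).                       *)

Local Open Scope ring_scope.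

Definition term := (int * (F * G) * nat)%type.
Definition pol := seq term.

Definition pmulFG (p q : F * G) : F * G := ((p.1 * q.1)%g, (p.2 * q.2)%g).

Definition padd (p q : pol) : pol := p ++ q.
Definition pneg (p : pol) : pol := [seq (- x.1.1, x.1.2, x.2) | x <- p].
Definition pmul (p q : pol) : pol :=
  [seq (x.1.1 * y.1.1, pmulFG x.1.2 y.1.2, (x.2 + y.2)%N) | x <- p, y <- q].

Definition pcoef (p : pol) (n : nat) (h : F * G) : int :=
  \sum_(x <- p | (x.1.2 == h) && (x.2 == n)) x.1.1.

Record mat := Mat { m11 : pol; m12 : pol; m21 : pol; m22 : pol }.

Definition mmul (A B : mat) : mat :=
  Mat (padd (pmul (m11 A) (m11 B)) (pmul (m12 A) (m21 B)))
      (padd (pmul (m11 A) (m12 B)) (pmul (m12 A) (m22 B)))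
      (padd (pmul (m21 A) (m11 B)) (pmul (m22 A) (m21 B)))
      (padd (pmul (m21 A) (m12 B)) (pmul (m22 A) (m22 B))).

Definition msub (A B : mat) : mat :=
  Mat (padd (m11 A) (pneg (m11 B))) (padd (m12 A) (pneg (m12 B)))
      (padd (m21 A) (pneg (m21 B))) (padd (m22 A) (pneg (m22 B))).

Definition e1 : F * G := (1%g, 1%g).

Definition mid : mat := Mat [:: (1, e1, 0%N)] [::] [::] [:: (1, e1, 0%N)].

(* rho(f) = [[f, (f-1)t], [0, 1]],  rho(g) = [[1, 0], [(g-1)t, g]] *)
Definition rho_letter (a : letter) : mat :=
  match a with
  | inl f => Mat [:: (1, (f, 1%g), 0%N)]
                 [:: (1, (f, 1%g), 1%N); (-1, e1, 1%N)]
                 [::] [:: (1, e1, 0%N)]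
  | inr g => Mat [:: (1, e1, 0%N)] [::]
                 [:: (1, (1%g, g), 1%N); (-1, e1, 1%N)]
                 [:: (1, (1%g, g), 0%N)]
  end.

Definition rho (x : freeprod) : mat := foldr (fun a M => mmul (rho_letter a) M) mid (proj1_sig x).

Variables (ltF : F -> F -> Prop) (ltG : G -> G -> Prop).

Definition lexlt (p q : F * G) : Prop :=
  ltF p.1 q.1 \/ (p.1 = q.1 /\ ltG p.2 q.2).

Definition posR (r : F * G -> int) : Prop :=
  exists h, 0 < r h /\ (forall h', lexlt h h' -> r h' = 0).

Definition entries (offd : bool) (M : mat) : seq pol :=
  if offd then [:: m11 M; m22 M; m21 M; m12 M]
  else [:: m11 M; m22 M; m12 M; m21 M].

(* M = sum_i M_i t^i is positive: for the least n with M_n <> 0, the first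
   nonzero entry of M_n is positive in R *)
Definition mpos (offd : bool) (M : mat) : Prop :=
  exists (n k : nat),
    [/\ (k < 4)%N,
        (forall m e h, (m < n)%N -> List.In e (entries offd M) -> pcoef e m h = 0),
        (forall j h, (j < k)%N -> pcoef (nth [::] (entries offd M) j) n h = 0) &
        posR (pcoef (nth [::] (entries offd M) k) n)].

Definition frak (offd : bool) (x y : freeprod) : Prop :=
  mpos offd (msub (rho y) (rho x)).

End FreeProduct.

From mathcomp Require Import all_boot all_order all_algebra ring.
From Stdlib Require Import Classical FunctionalExtensionality PropExtensionality.
From Stdlib Require Import ProofIrrelevance.

(* The constant term of rho(x) is diagonal with entries in F x G, so
   multiplying rho(y) - rho(x) by rho(z) on either side only translates the
   coefficients of its lowest nonzero degree by elements of F x G; as the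
   lexicographic order on F x G is bi-invariant, positivity, hence the order,
   is invariant.  Positive elements are closed under addition (transitivity),
   and totality reduces to the injectivity of rho: for a reduced word w, rho(w)
   has degree |w| and its top coefficient vanishes exactly in the row not
   belonging to the factor of the first letter of w, so that first letters can
   be cancelled inductively.  This uses that (c - 1) r <> 0 in Z[F x G] for
   c <> 1 and r <> 0, F x G being orderable.  Whether x precedes y only depends
   on how <_F and <_G compare the finitely many elements of F x G in the support
   of rho(y) - rho(x), which a basic open set can fix: the map is continuous.
   Finally rho(f) - rho(1) has lowest term diag((f, 1) - 1, 0), so that 1
   precedes f iff 1 <_F f, and similarly for G: the map is injective. *)

Set Implicit Arguments.
Unset Strict Implicit.
Unset Printing Implicit Defensive.

Import Order.TTheory GRing.Theory Num.Theory.

Local Open Scope ring_scope.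

Lemma pmulFGE (F G : groupType) (a b : F * G) : pmulFG a b = (a * b)%g.
Proof. by []. Qed.

Lemma mulVg_eq1 (T : groupType) (c h : T) : (c^-1 * h == 1)%g = (h == c).
Proof. by rewrite mulg_eq1 (inj_eq invg_inj) eq_sym. Qed.

(** * The ring R[t] and 2 x 2 matrices over it *)

Section Coefficients.
Variables F G : groupType.
Local Notation pol := (pol F G).

Lemma pcoef_nil n h : pcoef ([::] : pol) n h = 0.
Proof. by rewrite /pcoef big_nil. Qed.

Lemma pcoef_cons (x : term F G) p n h :
  pcoef (x :: p) n h = (if (x.1.2 == h) && (x.2 == n) then x.1.1 else 0) + pcoef p n h.
Proof. by rewrite /pcoef big_cons; case: ifP; rewrite ?add0r. Qed.

Lemma pcoef_padd (p q : pol) n h : pcoef (padd p q) n h = pcoef p n h + pcoef q n h.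
Proof. by rewrite /pcoef big_cat. Qed.

Lemma pcoef_pneg (p : pol) n h : pcoef (pneg p) n h = - pcoef p n h.
Proof. by rewrite /pcoef big_map -sumrN. Qed.

Lemma pcoef_pmull (p q : pol) n h :
  pcoef (pmul p q) n h =
  \sum_(x <- p | (x.2 <= n)%N) x.1.1 * pcoef q (n - x.2) (x.1.2^-1 * h)%g.
Proof.
rewrite /pcoef big_mkcond big_allpairs_dep [RHS]big_mkcond; apply: eq_bigr => x _ /=.
case: leqP => [le_xn|lt_nx]; last first.
  by rewrite big1 // => y _; rewrite gtn_eqF ?andbF // ltn_addr.
rewrite mulr_sumr [RHS]big_mkcond; apply: eq_bigr => y _ /=.
rewrite pmulFGE.
have -> : ((x.1.2 * y.1.2)%g == h) = (y.1.2 == x.1.2^-1 * h)%g.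
  by apply/eqP/eqP => [<-|->]; rewrite ?mulKg ?mulVKg.
have -> : ((x.2 + y.2)%N == n) = (y.2 == n - x.2)%N.
  by apply/eqP/eqP => [<-|->]; rewrite ?addKn ?subnKC.
by case: ifP; rewrite ?mulr0.
Qed.

Lemma pcoef_pmulr (p q : pol) n h :
  pcoef (pmul p q) n h =
  \sum_(y <- q | (y.2 <= n)%N) pcoef p (n - y.2) (h * y.1.2^-1)%g * y.1.1.
Proof.
rewrite /pcoef big_mkcond big_allpairs_dep exchange_big [RHS]big_mkcond.
apply: eq_bigr => y _ /=.
case: leqP => [le_yn|lt_ny]; last first.
  by rewrite big1 // => x _; rewrite gtn_eqF ?andbF // ltn_addl.
rewrite mulr_suml [RHS]big_mkcond; apply: eq_bigr => x _ /=.
rewrite pmulFGE.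
have -> : ((x.1.2 * y.1.2)%g == h) = (x.1.2 == h * y.1.2^-1)%g.
  by apply/eqP/eqP => [<-|->]; rewrite ?mulgK ?mulgVK.
have -> : ((x.2 + y.2)%N == n) = (x.2 == n - y.2)%N.
  by apply/eqP/eqP => [<-|->]; rewrite ?addnK ?subnK.
by case: ifP; rewrite ?mul0r.
Qed.

Lemma pcoef_pmul_cong (p p' q q' : pol) :
  pcoef p =2 pcoef p' -> pcoef q =2 pcoef q' -> pcoef (pmul p q) =2 pcoef (pmul p' q').
Proof.
move=> Ep Eq n h; transitivity (pcoef (pmul p' q) n h).
  by rewrite !pcoef_pmulr; apply: eq_bigr => y _; rewrite Ep.
by rewrite !pcoef_pmull; apply: eq_bigr => x _; rewrite Eq.
Qed.

Lemma pcoef_pmul_paddl (p p' q : pol) n h :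
  pcoef (pmul (padd p p') q) n h = pcoef (pmul p q) n h + pcoef (pmul p' q) n h.
Proof. by rewrite !pcoef_pmulr -big_split; apply: eq_bigr => y _; rewrite pcoef_padd mulrDl. Qed.

Lemma pcoef_pmul_paddr (p q q' : pol) n h :
  pcoef (pmul p (padd q q')) n h = pcoef (pmul p q) n h + pcoef (pmul p q') n h.
Proof. by rewrite !pcoef_pmull -big_split; apply: eq_bigr => x _; rewrite pcoef_padd mulrDr. Qed.

Lemma pcoef_pmul_pnegl (p q : pol) n h :
  pcoef (pmul (pneg p) q) n h = - pcoef (pmul p q) n h.
Proof. by rewrite !pcoef_pmulr -sumrN; apply: eq_bigr => y _; rewrite pcoef_pneg mulNr. Qed.

Lemma pcoef_pmul_pnegr (p q : pol) n h :
  pcoef (pmul p (pneg q)) n h = - pcoef (pmul p q) n h.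
Proof. by rewrite !pcoef_pmull -sumrN; apply: eq_bigr => x _; rewrite pcoef_pneg mulrN. Qed.

Lemma pmulA (p q r : pol) : pmul (pmul p q) r = pmul p (pmul q r).
Proof.
elim: p => [//|x p IH]; rewrite /pmul /= allpairs_cat allpairs_mapl.
congr (_ ++ _); last exact: IH.
elim: q {IH} => //= y q IHq; rewrite map_cat -IHq -map_comp; congr (_ ++ _).
by apply: eq_map => z /=; rewrite mulrA !pmulFGE mulgA addnA.
Qed.

Lemma pcoef_supp (p : pol) n h : pcoef p n h != 0 -> h \in [seq x.1.2 | x <- p].
Proof.
elim: p => [|x p IH]; first by rewrite pcoef_nil eqxx.
rewrite pcoef_cons /= in_cons; case: ifP => [/andP[/eqP -> _]|_]; first by rewrite eqxx.
by rewrite add0r => /IH ->; rewrite orbT.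
Qed.

End Coefficients.

Section Matrices.
Variables F G : groupType.
Local Notation mat := (mat F G).

Definition meq (A B : mat) :=
  [/\ pcoef (m11 A) =2 pcoef (m11 B), pcoef (m12 A) =2 pcoef (m12 B),
      pcoef (m21 A) =2 pcoef (m21 B) & pcoef (m22 A) =2 pcoef (m22 B)].

Lemma meq_refl A : meq A A.
Proof. by []. Qed.

Lemma meq_sym A B : meq A B -> meq B A.
Proof. by case=> E11 E12 E21 E22; split=> n h. Qed.

Lemma meq_trans A B C : meq A B -> meq B C -> meq A C.
Proof.
by case=> E11 E12 E21 E22 [E11' E12' E21' E22']; split=> n h;
  rewrite ?E11 ?E12 ?E21 ?E22 ?E11' ?E12' ?E21' ?E22'.
Qed.

Lemma meq_mmul A A' B B' : meq A A' -> meq B B' -> meq (mmul A B) (mmul A' B').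
Proof.
case=> E11 E12 E21 E22 [E11' E12' E21' E22'].
by split=> n h /=; rewrite !pcoef_padd; congr (_ + _); apply: pcoef_pmul_cong.
Qed.

Lemma meq_msub A A' B B' : meq A A' -> meq B B' -> meq (msub A B) (msub A' B').
Proof.
case=> E11 E12 E21 E22 [E11' E12' E21' E22'].
by split=> n h /=;
  rewrite !pcoef_padd !pcoef_pneg ?E11 ?E12 ?E21 ?E22 ?E11' ?E12' ?E21' ?E22'.
Qed.

Lemma mmulA A B C : meq (mmul (mmul A B) C) (mmul A (mmul B C)).
Proof.
split=> n h /=;
  by rewrite !pcoef_padd !pcoef_pmul_paddl !pcoef_pmul_paddr !pmulA; ring.
Qed.

Lemma mmul_msubr A B C : meq (mmul A (msub B C)) (msub (mmul A B) (mmul A C)).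
Proof.
split=> n h /=;
  by rewrite !pcoef_padd !pcoef_pmul_paddr !pcoef_pmul_pnegr !pcoef_pneg !pcoef_padd; ring.
Qed.

Lemma mmul_msubl A B C : meq (mmul (msub A B) C) (msub (mmul A C) (mmul B C)).
Proof.
split=> n h /=;
  by rewrite !pcoef_padd !pcoef_pmul_paddl !pcoef_pmul_pnegl !pcoef_pneg !pcoef_padd; ring.
Qed.

Lemma pcoef_pmull_one c (p : pol F G) n h :
  pcoef (pmul [:: (c, e1 F G, 0%N)] p) n h = c * pcoef p n h.
Proof. by rewrite pcoef_pmull big_cons big_nil /= subn0 addr0 invg1 mul1g. Qed.

Lemma pcoef_pmulr_one (p : pol F G) c n h :
  pcoef (pmul p [:: (c, e1 F G, 0%N)]) n h = pcoef p n h * c.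
Proof. by rewrite pcoef_pmulr big_cons big_nil /= subn0 addr0 invg1 mulg1. Qed.

Lemma mid_mmul M : meq (mmul (mid F G) M) M.
Proof.
split=> n h; rewrite /mmul /mid; cbn [m11 m12 m21 m22].
all: by rewrite pcoef_padd pcoef_pmull_one pcoef_pmull big_nil mul1r ?addr0 ?add0r.
Qed.

Lemma mmul_mid M : meq (mmul M (mid F G)) M.
Proof.
split=> n h; rewrite /mmul /mid; cbn [m11 m12 m21 m22].
all: by rewrite pcoef_padd pcoef_pmulr_one pcoef_pmulr big_nil mulr1 ?addr0 ?add0r.
Qed.

Lemma pcoef_mid0 h :
  [/\ pcoef (m11 (mid F G)) 0 h = (h == 1%g)%:R, pcoef (m12 (mid F G)) 0 h = 0,
      pcoef (m21 (mid F G)) 0 h = 0 & pcoef (m22 (mid F G)) 0 h = (h == 1%g)%:R].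
Proof.
rewrite /mid /= ?pcoef_cons pcoef_nil /= andbT addr0 eq_sym (_ : e1 F G = 1%g) //.
by split=> //; case: eqP.
Qed.

End Matrices.

(** * The representation rho *)

Section Letters.
Variables F G : groupType.
Local Notation L := (@rho_letter F G).

Lemma coef_ltrF_mmul (f : F) M m h (c := ((f, 1%g) : F * G)) :
  [/\ pcoef (m11 (mmul (L (inl f)) M)) m h = pcoef (m11 M) m (c^-1 * h)%g +
        (if (0 < m)%N then pcoef (m21 M) m.-1 (c^-1 * h)%g - pcoef (m21 M) m.-1 h else 0),
      pcoef (m12 (mmul (L (inl f)) M)) m h = pcoef (m12 M) m (c^-1 * h)%g +
        (if (0 < m)%N then pcoef (m22 M) m.-1 (c^-1 * h)%g - pcoef (m22 M) m.-1 h else 0),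
      pcoef (m21 (mmul (L (inl f)) M)) m h = pcoef (m21 M) m h &
      pcoef (m22 (mmul (L (inl f)) M)) m h = pcoef (m22 M) m h].
Proof.
rewrite /mmul /rho_letter; cbn [m11 m12 m21 m22].
split; rewrite pcoef_padd !pcoef_pmull !big_cons !big_nil /= ?subn0 ?subn1 ?invg1 ?mul1g.
all: rewrite ?mul1r ?mulN1r ?addr0 ?add0r //; by case: (0 < m)%N; rewrite ?addr0.
Qed.

Lemma coef_ltrG_mmul (g : G) M m h (c := ((1%g, g) : F * G)) :
  [/\ pcoef (m11 (mmul (L (inr g)) M)) m h = pcoef (m11 M) m h,
      pcoef (m12 (mmul (L (inr g)) M)) m h = pcoef (m12 M) m h,
      pcoef (m21 (mmul (L (inr g)) M)) m h =
        (if (0 < m)%N then pcoef (m11 M) m.-1 (c^-1 * h)%g - pcoef (m11 M) m.-1 h else 0)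
        + pcoef (m21 M) m (c^-1 * h)%g &
      pcoef (m22 (mmul (L (inr g)) M)) m h =
        (if (0 < m)%N then pcoef (m12 M) m.-1 (c^-1 * h)%g - pcoef (m12 M) m.-1 h else 0)
        + pcoef (m22 M) m (c^-1 * h)%g].
Proof.
rewrite /mmul /rho_letter; cbn [m11 m12 m21 m22].
split; rewrite pcoef_padd !pcoef_pmull !big_cons !big_nil /= ?subn0 ?subn1 ?invg1 ?mul1g.
all: rewrite ?mul1r ?mulN1r ?addr0 ?add0r //; by case: (0 < m)%N; rewrite ?addr0.
Qed.

Lemma coef_mmul_ltrF (f : F) M m h (c := ((f, 1%g) : F * G)) :
  [/\ pcoef (m11 (mmul M (L (inl f)))) m h = pcoef (m11 M) m (h * c^-1)%g,
      pcoef (m12 (mmul M (L (inl f)))) m h =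
        (if (0 < m)%N then pcoef (m11 M) m.-1 (h * c^-1)%g - pcoef (m11 M) m.-1 h else 0)
        + pcoef (m12 M) m h,
      pcoef (m21 (mmul M (L (inl f)))) m h = pcoef (m21 M) m (h * c^-1)%g &
      pcoef (m22 (mmul M (L (inl f)))) m h =
        (if (0 < m)%N then pcoef (m21 M) m.-1 (h * c^-1)%g - pcoef (m21 M) m.-1 h else 0)
        + pcoef (m22 M) m h].
Proof.
rewrite /mmul /rho_letter; cbn [m11 m12 m21 m22].
split; rewrite pcoef_padd !pcoef_pmulr !big_cons !big_nil /= ?subn0 ?subn1 ?invg1 ?mulg1.
all: rewrite ?mulr1 ?mulrN1 ?addr0 ?add0r //; by case: (0 < m)%N; rewrite ?addr0.
Qed.

Lemma coef_mmul_ltrG (g : G) M m h (c := ((1%g, g) : F * G)) :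
  [/\ pcoef (m11 (mmul M (L (inr g)))) m h = pcoef (m11 M) m h +
        (if (0 < m)%N then pcoef (m12 M) m.-1 (h * c^-1)%g - pcoef (m12 M) m.-1 h else 0),
      pcoef (m12 (mmul M (L (inr g)))) m h = pcoef (m12 M) m (h * c^-1)%g,
      pcoef (m21 (mmul M (L (inr g)))) m h = pcoef (m21 M) m h +
        (if (0 < m)%N then pcoef (m22 M) m.-1 (h * c^-1)%g - pcoef (m22 M) m.-1 h else 0) &
      pcoef (m22 (mmul M (L (inr g)))) m h = pcoef (m22 M) m (h * c^-1)%g].
Proof.
rewrite /mmul /rho_letter; cbn [m11 m12 m21 m22].
split; rewrite pcoef_padd !pcoef_pmulr !big_cons !big_nil /= ?subn0 ?subn1 ?invg1 ?mulg1.
all: rewrite ?mulr1 ?mulrN1 ?addr0 ?add0r //; by case: (0 < m)%N; rewrite ?addr0.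
Qed.

End Letters.

Section Words.
Variables F G : groupType.
Local Notation letter := (letter F G).

Lemma reduced_ltr (a : letter) : nontriv a -> reduced [:: a].
Proof. by move=> na; rewrite /reduced /= na. Qed.

Definition ltr_word (a : letter) (na : nontriv a) : freeprod F G :=
  exist _ [:: a] (reduced_ltr na).

Definition ltr_inv (a : letter) : letter :=
  match a with inl f => inl f^-1%g | inr g => inr g^-1%g end.

Lemma push_ltr_invK a w : nontriv a -> push (ltr_inv a) (a :: w) = w.
Proof. by case: a => x /= /negbTE nx; rewrite invg_eq1 nx mulVg eqxx. Qed.

Lemma size_push_ltr_inv a b w : nontriv a -> side a = side b ->
  size (push (ltr_inv a) (b :: w)) = (size w + (a != b))%N.
Proof.
case: a b => [f|g] [f'|g'] //= /negbTE nx _; rewrite invg_eq1 nx mulg_eq1 (inj_eq invg_inj).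
all: by case: eqP => [->|/eqP ne]; rewrite /= ?eqxx ?addn0 // ne addn1.
Qed.

End Words.

Section RhoMorphism.
Variables F G : groupType.
Local Notation mat := (mat F G).
Local Notation letter := (letter F G).
Local Notation L := (@rho_letter F G).

Lemma ltrF_mul (f f' : F) : meq (mmul (L (inl f)) (L (inl f'))) (L (inl (f * f')%g)).
Proof.
split=> n h; rewrite /mmul /rho_letter /pmul /padd /= ?pcoef_cons ?pcoef_nil /pmulFG /e1 /=.
all: rewrite ?mulg1 ?mul1g ?addr0 ?add0r ?mul1r ?mulr1 ?addn0 ?add0n //.
by case: (((f, 1%g) == h) && _); rewrite ?add0r // addKr.
Qed.

Lemma ltrG_mul (g g' : G) : meq (mmul (L (inr g)) (L (inr g'))) (L (inr (g * g')%g)).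
Proof.
split=> n h; rewrite /mmul /rho_letter /pmul /padd /= ?pcoef_cons ?pcoef_nil /pmulFG /e1 /=.
all: rewrite ?mulg1 ?mul1g ?addr0 ?add0r ?mul1r ?mulr1 ?addn0 ?add0n //.
by case: (((1%g, g) == h) && _); ring.
Qed.

Lemma mmul_ltr1 a M : ~~ nontriv a -> meq (mmul (L a) M) M.
Proof.
move=> triv; apply: meq_trans (mid_mmul M); apply: meq_mmul (meq_refl _).
by case: a triv => x /negPn/eqP ->; split=> n h;
  rewrite /rho_letter /mid /= ?pcoef_cons ?pcoef_nil //; case: (_ && _).
Qed.

Definition rhow (w : seq letter) : mat :=
  foldr (fun a M => mmul (L a) M) (mid F G) w.

Lemma rhow_cons x (w : seq letter) : rhow (x :: w) = mmul (L x) (rhow w).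
Proof. by []. Qed.

Lemma rhow_push a w : meq (rhow (push a w)) (mmul (L a) (rhow w)).
Proof.
case: a => [f|g]; rewrite [push _ _]/=; case: eqP => [->|_];
  try by apply/meq_sym/mmul_ltr1; rewrite /= eqxx.
- case: w => [|[f'|g'] w]; try exact: meq_refl.
  apply: meq_trans _ (mmulA _ _ _).
  apply: meq_trans _ (meq_mmul (meq_sym (ltrF_mul f f')) (meq_refl _)).
  by case: eqP => [->|_]; [apply/meq_sym/mmul_ltr1; rewrite /= eqxx | apply: meq_refl].
- case: w => [|[f'|g'] w]; try exact: meq_refl.
  apply: meq_trans _ (mmulA _ _ _).
  apply: meq_trans _ (meq_mmul (meq_sym (ltrG_mul g g')) (meq_refl _)).
  by case: eqP => [->|_]; [apply/meq_sym/mmul_ltr1; rewrite /= eqxx | apply: meq_refl].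
Qed.

Lemma rhow_foldr_push (u v : seq letter) :
  meq (rhow (foldr (@push F G) v u)) (mmul (rhow u) (rhow v)).
Proof.
elim: u => [|a u IH] /=; first exact: meq_sym (mid_mmul _).
apply: meq_trans (rhow_push _ _) _.
apply: meq_trans (meq_mmul (meq_refl _) IH) _.
exact: meq_sym (mmulA _ _ _).
Qed.

Lemma rho_mul (x y : freeprod F G) : meq (rho (fp_mul x y)) (mmul (rho x) (rho y)).
Proof. exact: rhow_foldr_push. Qed.

End RhoMorphism.

(** * Leading coefficients *)

Section LeadingCoefficient.
Variables (T : eqType) (lt : T -> T -> Prop).
Hypotheses (lt_irr : forall x, ~ lt x x)
  (lt_trans : forall x y z, lt x y -> lt y z -> lt x z)
  (lt_total : forall x y, x <> y -> lt x y \/ lt y x).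

Definition lead_pos (r : T -> int) := exists h, 0 < r h /\ forall h', lt h h' -> r h' = 0.

Lemma lead_pos_neq0 r : lead_pos r -> exists h, r h != 0.
Proof. by case=> h [r_gt0 _]; exists h; rewrite gt_eqF. Qed.

Lemma eq_lead_pos r s : r =1 s -> lead_pos r -> lead_pos s.
Proof. by move=> E [h [r_gt0 r0]]; exists h; rewrite -E; split=> // h' /r0; rewrite E. Qed.

Lemma lead_posD r s : lead_pos r -> lead_pos s -> lead_pos (fun h => r h + s h).
Proof.
case=> h1 [p1 z1] [h2 [p2 z2]].
have [e|/eqP ne] := eqVneq h1 h2.
  rewrite -e in p2 z2; exists h1; split=> [|h' l]; first exact: addr_gt0.
  by rewrite z1 // z2 // addr0.
case: (lt_total ne) => l.
- exists h2; split=> [|h' l']; first by rewrite z1 // add0r.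
  by rewrite z2 // z1 ?addr0 //; apply: lt_trans l l'.
- exists h1; split=> [|h' l']; first by rewrite z2 // addr0.
  by rewrite z1 // z2 ?addr0 //; apply: lt_trans l l'.
Qed.

Lemma lead_pos_comp r (tau : T -> T) :
  (forall h h', lt h h' -> lt (tau h) (tau h')) -> (forall h, exists h', tau h' = h) ->
  lead_pos r -> lead_pos (r \o tau).
Proof.
move=> mono surj [h0 [p0 z0]]; have [h1 e] := surj h0.
by exists h1; rewrite /= e; split=> // h' /mono; rewrite e; apply: z0.
Qed.

Lemma exists_max (s : seq T) : s != [::] ->
  exists2 m, m \in s & forall y, y \in s -> ~ lt m y.
Proof.
elim: s => // x [_ _|y s IH _]; first by exists x => [|_ /[1!inE] /eqP ->]; rewrite ?inE.
have [m ms m_max] := IH isT.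
have [mx|xm] := classic (lt m x).
  exists x => [|z]; rewrite ?mem_head // inE => /predU1P[-> //|zs xz].
  exact: m_max zs (lt_trans mx xz).
by exists m => [|z]; rewrite inE ?ms ?orbT // => /predU1P[->|/m_max].
Qed.

Lemma exists_lead (r : T -> int) (s : seq T) :
  (forall h, r h != 0 -> h \in s) -> (exists h, r h != 0) ->
  exists h, r h != 0 /\ forall h', lt h h' -> r h' = 0.
Proof.
move=> supp [h0 nz0].
have : [seq h <- s | r h != 0] != [::].
  by apply/eqP => /(congr1 (fun s => h0 \in s)); rewrite mem_filter nz0 supp.
case/exists_max => m; rewrite mem_filter => /andP[nzm _] m_max.
exists m; split=> // h' mh'; apply/eqP/negPn/negP => nz'.
by apply: (m_max h' _ mh'); rewrite mem_filter nz' supp.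
Qed.

Lemma lead_pos_total (r : T -> int) (s : seq T) :
  (forall h, r h != 0 -> h \in s) -> (exists h, r h != 0) ->
  lead_pos r \/ lead_pos (fun h => - r h).
Proof.
move=> supp /(exists_lead supp) [h [nz z]].
case: (ltrgtP (r h) 0) => [lt0|gt0|/eqP]; last by rewrite (negbTE nz).
- by right; exists h; split=> [|h' /z ->]; rewrite ?oppr_gt0 ?oppr0.
- by left; exists h.
Qed.

(* [E j n h] stands for the coefficient of [h t^n] in the [j]-th entry. *)
Definition lowest_pos (E : nat -> nat -> T -> int) :=
  exists n k, [/\ (k < 4)%N,
    (forall m j h, (m < n)%N -> (j < 4)%N -> E j m h = 0),
    (forall j h, (j < k)%N -> E j n h = 0) & lead_pos (E k n)].

Lemma eq_lowest_pos E E' : (forall j n h, E j n h = E' j n h) ->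
  lowest_pos E -> lowest_pos E'.
Proof.
move=> EE' [n [k [k4 Z1 Z2 P]]]; exists n, k; split=> //.
- by move=> m j h mn j4; rewrite -EE' Z1.
- by move=> j h jk; rewrite -EE' Z2.
- by apply: eq_lead_pos P => h; rewrite EE'.
Qed.

Lemma lowest_posD E E' : lowest_pos E -> lowest_pos E' ->
  lowest_pos (fun j n h => E j n h + E' j n h).
Proof.
move=> [n [k [k4 Z1 Z2 P]]] [n' [k' [k4' Z1' Z2' P']]].
have [ltn|gtn|en] := ltngtP n n'; last subst n'.
- exists n, k; split=> // [m j h mn j4|j h jk|].
  + by rewrite Z1 ?Z1' ?addr0 // (ltn_trans mn ltn).
  + by rewrite Z2 ?Z1' ?addr0 // (ltn_trans jk k4).
  + by apply: eq_lead_pos P => h; rewrite (Z1' n) ?addr0.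
- exists n', k'; split=> // [m j h mn j4|j h jk|].
  + by rewrite Z1 ?Z1' ?addr0 // (ltn_trans mn gtn).
  + by rewrite Z2' ?Z1 ?addr0 // (ltn_trans jk k4').
  + by apply: eq_lead_pos P' => h; rewrite (Z1 n') ?add0r.
have [ltk|gtk|ek] := ltngtP k k'; last subst k'.
- exists n, k; split=> // [m j h mn j4|j h jk|].
  + by rewrite Z1 ?Z1' ?addr0.
  + by rewrite Z2 ?Z2' ?addr0 // (ltn_trans jk ltk).
  + by apply: eq_lead_pos P => h; rewrite (Z2' k) ?addr0.
- exists n, k'; split=> // [m j h mn j4|j h jk|].
  + by rewrite Z1 ?Z1' ?addr0.
  + by rewrite Z2 ?Z2' ?addr0 // (ltn_trans jk gtk).
  + by apply: eq_lead_pos P' => h; rewrite (Z2 k') ?add0r.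
exists n, k; split=> // [m j h mn j4|j h jk|].
- by rewrite Z1 ?Z1' ?addr0.
- by rewrite Z2 ?Z2' ?addr0.
- exact: lead_posD.
Qed.

Lemma ex_least_nat (P : nat -> Prop) :
  (exists n, P n) -> exists n, P n /\ forall m, (m < n)%N -> ~ P m.
Proof.
case=> n; elim: n {-2}n (leqnn n) => [|N IH] n le_nN Pn.
  by exists n; split=> // m lt_mn; move: (leq_trans lt_mn le_nN); rewrite ltn0.
have [[m [lt_mn Pm]]|min_n] := classic (exists m, (m < n)%N /\ P m).
  by apply: (IH m) => //; rewrite -ltnS (leq_trans lt_mn).
by exists n; split=> // m lt_mn Pm; apply: min_n; exists m.
Qed.

Lemma lowest_pos_total E (s : seq T) :
  (forall j n h, E j n h != 0 -> h \in s) ->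
  (exists j n h, (j < 4)%N /\ E j n h != 0) ->
  lowest_pos E \/ lowest_pos (fun j n h => - E j n h).
Proof.
move=> supp [j0 [n0 [h0 nz0]]].
have : exists n, exists j h, (j < 4)%N /\ E j n h != 0 by exists n0, j0, h0.
case/ex_least_nat=> n [[j [h [j4 nz]]] min_n].
have : exists k, (k < 4)%N /\ exists h, E k n h != 0 by exists j; split; last exists h.
case/ex_least_nat=> k [[k4 [h' nz']] min_k].
have Z1 m j' h'' : (m < n)%N -> (j' < 4)%N -> E j' m h'' = 0.
  move=> mn j'4; apply/eqP/negPn/negP => nz''.
  by apply: (min_n m mn); exists j', h''.
have Z2 j' h'' : (j' < k)%N -> E j' n h'' = 0.
  move=> j'k; apply/eqP/negPn/negP => nz''.
  by apply: (min_k j' j'k); split; [exact: ltn_trans j'k k4 | exists h''].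
have [P|P] := lead_pos_total (supp k n) (ex_intro _ h' nz'); [left|right].
all: exists n, k; split=> // [m j' h'' mn j'4|j' h'' j'k].
all: by rewrite ?Z2 ?Z1 ?oppr0.
Qed.

Lemma lowest_pos_translate E E' (tau : nat -> T -> T) :
  (forall j h h', lt h h' -> lt (tau j h) (tau j h')) ->
  (forall j h, exists h', tau j h' = h) ->
  (forall n, (forall m j h, (m < n)%N -> (j < 4)%N -> E j m h = 0) ->
     forall m j h, (m <= n)%N -> (j < 4)%N -> E' j m h = E j m (tau j h)) ->
  lowest_pos E -> lowest_pos E'.
Proof.
move=> mono surj EE' [n [k [k4 Z1 Z2 P]]]; have {}EE' := EE' n Z1.
exists n, k; split=> // [m j h mn j4|j h jk|].
- by rewrite EE' ?Z1 // ltnW.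
- by rewrite EE' ?Z2 // (ltn_trans jk k4).
- by apply: eq_lead_pos (lead_pos_comp (mono k) (surj k) P) => h; rewrite EE'.
Qed.

Lemma lead_pos_dirac_sub a b : a != b ->
  lead_pos (fun h => (h == a)%:R - (h == b)%:R) <-> lt b a.
Proof.
move=> /eqP neq_ab; split=> [[h0 [p0 z0]]|lt_ba].
  have h0a : h0 = a.
    by apply/eqP; apply: contraTT p0 => /negbTE ->; rewrite sub0r oppr_gt0; case: eqP.
  have /negbTE nba : b != a by apply/eqP => /esym.
  rewrite h0a in z0; case: (lt_total neq_ab) => // /z0/eqP.
  by rewrite nba eqxx sub0r oppr_eq0 oner_eq0.
exists a; rewrite eqxx; case: eqP => // _; split=> // h' lt_ah'.
case: eqP => [eq_h'a|_]; first by move: lt_ah'; rewrite eq_h'a => /lt_irr.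
by case: eqP => [eq_h'b|//]; move: lt_ah'; rewrite eq_h'b => /(lt_trans lt_ba)/lt_irr.
Qed.

Lemma lowest_pos_at0 E k : (k < 4)%N -> (forall j h, (j < k)%N -> E j 0%N h = 0) ->
  (exists h, E k 0%N h != 0) -> lowest_pos E <-> lead_pos (E k 0%N).
Proof.
move=> k4 Z nz; split=> [[n [k' [_ Z1 Z2 P]]]|P]; last by exists 0%N, k.
case: n Z1 Z2 P => [|n] Z1 Z2 P; last by case: nz => h; rewrite Z1.
have [lt_kk'|lt_k'k|-> //] := ltngtP k k'.
- by case: nz => h; rewrite Z2.
- by have [h] := lead_pos_neq0 P; rewrite Z.
Qed.

End LeadingCoefficient.

Lemma lead_pos_transfer (T : eqType) (lt lt' : T -> T -> Prop) (r : T -> int)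
    (s : seq T) :
  (forall x y, x <> y -> lt x y \/ lt y x) ->
  (forall x, ~ lt' x x) -> (forall x y z, lt' x y -> lt' y z -> lt' x z) ->
  (forall h, r h != 0 -> h \in s) -> {in s &, forall x y, lt x y -> lt' x y} ->
  lead_pos lt r -> lead_pos lt' r.
Proof.
move=> lt_total irr' trans' supp lt_lt' [h0 [p0 z0]]; exists h0; split=> // h' l'.
apply/eqP/negPn/negP => nz.
have h0s : h0 \in s by apply: supp; rewrite gt_eqF.
have [e|/eqP ne] := eqVneq h0 h'; first by apply: (irr' h0); rewrite {2}e.
case: (lt_total _ _ ne) => [/z0/eqP|l]; first by rewrite (negbTE nz).
exact: irr' (trans' _ _ _ l' (lt_lt' _ _ (supp _ nz) h0s l)).
Qed.

Lemma lowest_pos_transfer (T : eqType) (lt lt' : T -> T -> Prop) E (s : seq T) :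
  (forall x y, x <> y -> lt x y \/ lt y x) ->
  (forall x, ~ lt' x x) -> (forall x y z, lt' x y -> lt' y z -> lt' x z) ->
  (forall j n h, E j n h != 0 -> h \in s) -> {in s &, forall x y, lt x y -> lt' x y} ->
  lowest_pos lt E -> lowest_pos lt' E.
Proof.
move=> total irr' trans' supp lt_lt' [n [k [k4 Z1 Z2 P]]]; exists n, k; split=> //.
exact: lead_pos_transfer total irr' trans' (supp k n) lt_lt' P.
Qed.

(** * Invariance of positivity *)

Section Lex.
Variables (F G : groupType) (ltF : F -> F -> Prop) (ltG : G -> G -> Prop).
Hypotheses (HF : is_ordering (fun x y : F => (x * y)%g) ltF)
  (HG : is_ordering (fun x y : G => (x * y)%g) ltG).
Local Notation lex := (lexlt ltF ltG).

Lemma lex_irr h : ~ lex h h.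
Proof. by case: HF HG => irrF _ _ _ _ [irrG _ _ _ _] [/irrF|[_ /irrG]]. Qed.

Lemma lex_trans h1 h2 h3 : lex h1 h2 -> lex h2 h3 -> lex h1 h3.
Proof.
case: HF HG => _ trF _ _ _ [_ trG _ _ _].
case=> [l12|[e12 l12]] [l23|[e23 l23]].
- by left; apply: trF l23.
- by left; rewrite -e23.
- by left; rewrite e12.
- by right; split; [rewrite e12 | apply: trG l23].
Qed.

Lemma lex_total h h' : h <> h' -> lex h h' \/ lex h' h.
Proof.
case: HF HG => _ _ toF _ _ [_ _ toG _ _].
case: h h' => [h1 h2] [h1' h2'] ne.
have [e1'|/eqP ne1] := eqVneq h1 h1'; last by case: (toF _ _ ne1) => l; [left|right]; left.
have ne2 : h2 <> h2' by move=> e2; apply: ne; rewrite e1' e2.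
by case: (toG _ _ ne2) => l; [left|right]; right.
Qed.

Lemma lex_mull c h h' : lex h h' -> lex (c * h)%g (c * h')%g.
Proof.
case: HF HG => _ _ _ lF _ [_ _ _ lG _].
by case=> [l|[e l]]; [left; apply: lF | right; split; [rewrite /= e | apply: lG]].
Qed.

Lemma lex_mulr c h h' : lex h h' -> lex (h * c)%g (h' * c)%g.
Proof.
case: HF HG => _ _ _ _ rF [_ _ _ _ rG].
by case=> [l|[e l]]; [left; apply: rF | right; split; [rewrite /= e | apply: rG]].
Qed.

End Lex.

Section LowestTerms.
Variables F G : groupType.
Local Notation mat := (mat F G).
Local Notation letter := (letter F G).
Local Notation L := (@rho_letter F G).

Definition vanish_at (M : mat) m :=
  [/\ pcoef (m11 M) m =1 (fun=> 0), pcoef (m12 M) m =1 (fun=> 0),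
      pcoef (m21 M) m =1 (fun=> 0) & pcoef (m22 M) m =1 (fun=> 0)].

Definition vanish_below (M : mat) n := forall m, (m < n)%N -> vanish_at M m.

(* [t i j] reindexes the entry in row [i] and column [j]; [false] stands for
   the first row or column. *)
Definition lowest_translate (t : bool -> bool -> F * G -> F * G) (M N : mat) :=
  forall n, vanish_below M n -> forall m h, (m <= n)%N ->
  [/\ pcoef (m11 N) m h = pcoef (m11 M) m (t false false h),
      pcoef (m12 N) m h = pcoef (m12 M) m (t false true h),
      pcoef (m21 N) m h = pcoef (m21 M) m (t true false h) &
      pcoef (m22 N) m h = pcoef (m22 M) m (t true true h)].

Lemma lowest_translate_vanish t M N n :
  lowest_translate t M N -> vanish_below M n -> vanish_below N n.
Proof.
move=> tMN vM m lt_mn; have [Z11 Z12 Z21 Z22] := vM m lt_mn.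
split=> h; have [E11 E12 E21 E22] := tMN n vM m h (ltnW lt_mn).
all: by rewrite ?E11 ?E12 ?E21 ?E22 ?Z11 ?Z12 ?Z21 ?Z22.
Qed.

Lemma lowest_translate_comp t t' M N P :
  lowest_translate t M N -> lowest_translate t' N P ->
  lowest_translate (fun i j => t i j \o t' i j) M P.
Proof.
move=> tMN tNP n vM m h le_mn.
have [-> -> -> ->] := tNP n (lowest_translate_vanish tMN vM) m h le_mn.
have E i j := tMN n vM m (t' i j h) le_mn.
by split; [case: (E false false) | case: (E false true)
          | case: (E true false) | case: (E true true)].
Qed.

Lemma lowest_translate_meq t M N N' :
  meq N N' -> lowest_translate t M N -> lowest_translate t M N'.
Proof.
case=> E11 E12 E21 E22 tMN n vM m h le_mn.
by rewrite -E11 -E12 -E21 -E22; apply: tMN n vM m h le_mn.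
Qed.

Lemma eq_lowest_translate t t' M N : (forall i j, t i j =1 t' i j) ->
  lowest_translate t M N -> lowest_translate t' M N.
Proof. by move=> E tMN n vM m h le_mn; rewrite -!E; apply: tMN n vM m h le_mn. Qed.

Lemma lowest_translate_id M : lowest_translate (fun _ _ => id) M M.
Proof. by []. Qed.

(* [ltr_diag x] is the diagonal of the constant term of [rho_letter x]. *)
Definition ltr_diag (x : letter) (i : bool) : F * G :=
  match x with
  | inl f => if i then 1%g else (f, 1%g)
  | inr g => if i then (1%g, g) else 1%g
  end.

Definition word_diag (w : seq letter) (i : bool) : F * G :=
  (\prod_(x <- w) ltr_diag x i)%g.

Lemma ltr_mmul_translate x M :
  lowest_translate (fun i _ h => (ltr_diag x i)^-1 * h)%g M (mmul (L x) M).
Proof.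
move=> n vM m h le_mn.
have vM1 (m_gt0 : (0 < m)%N) := vM m.-1 ltac:(by rewrite prednK).
case: x => [f|g] /=; rewrite invg1 mul1g.
- have [-> -> -> ->] := coef_ltrF_mmul f M m h.
  by case: ifP => [/vM1[_ _ Z21 Z22]|_]; rewrite ?Z21 ?Z22 ?subrr ?addr0.
- have [-> -> -> ->] := coef_ltrG_mmul g M m h.
  by case: ifP => [/vM1[Z11 Z12 _ _]|_]; rewrite ?Z11 ?Z12 ?subrr ?add0r.
Qed.

Lemma mmul_ltr_translate x M :
  lowest_translate (fun _ j h => h * (ltr_diag x j)^-1)%g M (mmul M (L x)).
Proof.
move=> n vM m h le_mn.
have vM1 (m_gt0 : (0 < m)%N) := vM m.-1 ltac:(by rewrite prednK).
case: x => [f|g] /=; rewrite invg1 mulg1.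
- have [-> -> -> ->] := coef_mmul_ltrF f M m h.
  by case: ifP => [/vM1[Z11 _ Z21 _]|_]; rewrite ?Z11 ?Z21 ?subrr ?add0r.
- have [-> -> -> ->] := coef_mmul_ltrG g M m h.
  by case: ifP => [/vM1[_ Z12 _ Z22]|_]; rewrite ?Z12 ?Z22 ?subrr ?addr0.
Qed.

Lemma rhow_mmul_translate w M :
  lowest_translate (fun i _ h => (word_diag w i)^-1 * h)%g M (mmul (rhow w) M).
Proof.
elim: w M => [|x w IH] M.
  apply: lowest_translate_meq (meq_sym (mid_mmul M)) _.
  by apply: (eq_lowest_translate _ (@lowest_translate_id M)) => i j h /=;
    rewrite /word_diag big_nil invg1 mul1g.
apply: lowest_translate_meq (meq_sym (mmulA _ _ _)) _.
apply: (eq_lowest_translate _ (lowest_translate_comp (IH M) (@ltr_mmul_translate x _))).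
by move=> i j h /=; rewrite /word_diag big_cons invgM mulgA.
Qed.

Lemma mmul_rhow_translate w M :
  lowest_translate (fun _ j h => h * (word_diag w j)^-1)%g M (mmul M (rhow w)).
Proof.
elim: w M => [|x w IH] M.
  apply: lowest_translate_meq (meq_sym (mmul_mid M)) _.
  by apply: (eq_lowest_translate _ (@lowest_translate_id M)) => i j h /=;
    rewrite /word_diag big_nil invg1 mulg1.
apply: lowest_translate_meq (mmulA _ _ _) _.
apply: (eq_lowest_translate _
  (lowest_translate_comp (@mmul_ltr_translate x M) (IH (mmul M (L x))))).
by move=> i j h /=; rewrite /word_diag big_cons invgM mulgA.
Qed.

End LowestTerms.

Section Invariance.
Variables (F G : groupType) (ltF : F -> F -> Prop) (ltG : G -> G -> Prop).
Hypotheses (HF : is_ordering (fun x y : F => (x * y)%g) ltF)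
  (HG : is_ordering (fun x y : G => (x * y)%g) ltG).
Variable offd : bool.
Local Notation lex := (lexlt ltF ltG).
Local Notation mat := (mat F G).
Local Notation mpos := (mpos ltF ltG offd).

Definition ecoef (M : mat) j n h := pcoef (nth [::] (entries offd M) j) n h.

Definition entry_pos (k : nat) : bool * bool :=
  match k with
  | 0 => (false, false)
  | 1 => (true, true)
  | 2 => if offd then (true, false) else (false, true)
  | _ => if offd then (false, true) else (true, false)
  end.

Lemma mposP M : mpos M <-> lowest_pos lex (ecoef M).
Proof.
rewrite /mpos /ecoef /entries; split; case=> n [k [k4 Z1 Z2 P]]; exists n, k; split=> //.
- move=> m j h mn j4; apply: Z1 => //.
  by case: offd; do 4?[case: j j4 => [|j] j4; first by cbn; tauto].
- move=> m e h mn; case: offd Z1 => Z1 /= [<-|[<-|[<-|[<-|[]]]]].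
  all: first [exact: (Z1 m 0%N) | exact: (Z1 m 1%N) | exact: (Z1 m 2%N) | exact: (Z1 m 3%N)].
Qed.

Lemma ecoef_msub A B j n h : ecoef (msub A B) j n h = ecoef A j n h - ecoef B j n h.
Proof.
rewrite /ecoef /entries; case: offd; do 4?[case: j => [|j]];
  by rewrite /= ?pcoef_padd ?pcoef_pneg ?nth_nil ?pcoef_nil ?subr0.
Qed.

Lemma ecoef_meq A B j n h : meq A B -> ecoef A j n h = ecoef B j n h.
Proof.
by case=> E11 E12 E21 E22; rewrite /ecoef /entries; case: offd; do 4?[case: j => [|j]].
Qed.

Lemma meq_ecoef A B :
  (forall j n h, (j < 4)%N -> ecoef A j n h = ecoef B j n h) -> meq A B.
Proof.
rewrite /ecoef /entries => E; case: offd E => E; split=> n h.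
all: first [exact: (E 0%N n h) | exact: (E 1%N n h) | exact: (E 2%N n h) | exact: (E 3%N n h)].
Qed.

Definition msupp (M : mat) : seq (F * G) :=
  [seq x.1.2 | x <- m11 M ++ m12 M ++ m21 M ++ m22 M].

Lemma ecoef_supp M j n h : ecoef M j n h != 0 -> h \in msupp M.
Proof.
move/pcoef_supp; rewrite /msupp !map_cat !mem_cat /entries.
by case: offd; do 4?[case: j => [|j]]; rewrite /= ?nth_nil // => ->; rewrite ?orbT.
Qed.

Lemma mpos_translate t M N :
  (forall i j h h', lex h h' -> lex (t i j h) (t i j h')) ->
  (forall i j h, exists h', t i j h' = h) ->
  lowest_translate t M N -> mpos M -> mpos N.
Proof.
move=> mono surj tMN /mposP P; apply/mposP.
apply: (lowest_pos_translate (tau := fun k => t (entry_pos k).1 (entry_pos k).2)) P.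
- by move=> k h h'; apply: mono.
- by move=> k h; apply: surj.
move=> n Z m j h le_mn j4.
have vM : vanish_below M n.
  move=> m' lt_m'n; have {}Z j h' := Z m' j h' lt_m'n.
  rewrite /ecoef /entries in Z; case: offd Z => Z; split=> h';
    by first [exact: (Z 0%N h' isT) | exact: (Z 1%N h' isT)
             | exact: (Z 2%N h' isT) | exact: (Z 3%N h' isT)].
have [E11 E12 E21 E22] := tMN n vM m h le_mn.
by rewrite /ecoef /entries /entry_pos; case: offd; do 4?[case: j j4 => [|j] j4] => //=.
Qed.

Lemma mpos_meq A B : meq A B -> mpos A -> mpos B.
Proof.
by move=> E /mposP P; apply/mposP; apply: eq_lowest_pos P => j n h; apply: ecoef_meq.
Qed.

Lemma mpos_mull w M : mpos M -> mpos (mmul (rhow w) M).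
Proof.
apply: (mpos_translate _ _ (@rhow_mmul_translate _ _ w M)) => [i j h h'|i j h].
- exact: (lex_mull HF HG).
- by exists (word_diag w i * h)%g; rewrite mulKg.
Qed.

Lemma mpos_mulr w M : mpos M -> mpos (mmul M (rhow w)).
Proof.
apply: (mpos_translate _ _ (@mmul_rhow_translate _ _ w M)) => [i j h h'|i j h].
- exact: (lex_mulr HF HG).
- by exists (h * word_diag w j)%g; rewrite mulgK.
Qed.

End Invariance.

(** * Injectivity of rho *)

Section OrderedGroupRing.
Variables (H : groupType) (lt : H -> H -> Prop).
Hypotheses (lt_irr : forall x, ~ lt x x)
  (lt_trans : forall x y z, lt x y -> lt y z -> lt x z)
  (lt_total : forall x y, x <> y -> lt x y \/ lt y x)
  (lt_mull : forall c x y, lt x y -> lt (c * x)%g (c * y)%g)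
  (lt_mulr : forall c x y, lt x y -> lt (x * c)%g (y * c)%g).

(* That is, (c - 1) r <> 0 in the group ring: compare [r] with its translate
   at the top of the support of [r]. *)
Lemma translate_sub_neq0 (r : H -> int) (s : seq H) c :
  (forall h, r h != 0 -> h \in s) -> (exists h, r h != 0) -> c != 1%g ->
  exists h, r (c^-1 * h)%g - r h != 0.
Proof.
move=> supp nz_r /eqP c_neq1; have [h0 [nz0 z0]] := exists_lead lt_irr lt_trans supp nz_r.
case: (lt_total c_neq1) => [lt_c1|lt_1c].
- exists h0; rewrite z0 ?sub0r ?oppr_eq0 //.
  by have := lt_mulr h0 (lt_mull c^-1 lt_c1); rewrite mulVg mulg1 mul1g.
- exists (c * h0)%g; rewrite mulKg (z0 (c * h0)%g) ?subr0 //.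
  by have := lt_mulr h0 lt_1c; rewrite mul1g.
Qed.

End OrderedGroupRing.

Section TopDegree.
Variables F G : groupType.
Local Notation mat := (mat F G).
Local Notation letter := (letter F G).

Lemma rhow_deg (w : seq letter) m : (size w < m)%N -> vanish_at (rhow w) m.
Proof.
elim: w m => [|x w IH] [|m] // lt_wm.
  by split=> h; rewrite /mid /= ?pcoef_cons pcoef_nil ?andbF ?addr0.
have [Z11 Z12 Z21 Z22] := IH m lt_wm.
have [Y11 Y12 Y21 Y22] := IH m.+1 (ltnW lt_wm).
rewrite rhow_cons; case: x {lt_wm} => [f|g]; split=> h.
all: first [have [E11 E12 E21 E22] := coef_ltrF_mmul f (rhow w) m.+1 h
           | have [E11 E12 E21 E22] := coef_ltrG_mmul g (rhow w) m.+1 h].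
all: by rewrite ?E11 ?E12 ?E21 ?E22 /= ?Z11 ?Z12 ?Z21 ?Z22 ?Y11 ?Y12 ?Y21 ?Y22
  ?subrr ?addr0.
Qed.

(* [i = false] stands for the first row. *)
Definition row_nz (M : mat) n (i : bool) := exists h,
  if i then (pcoef (m21 M) n h != 0) || (pcoef (m22 M) n h != 0)
  else (pcoef (m11 M) n h != 0) || (pcoef (m12 M) n h != 0).

Lemma mid_row_nz i : row_nz (mid F G) 0 i.
Proof. by exists 1%g; case: i; rewrite /mid /= pcoef_cons pcoef_nil !eqxx addr0. Qed.

Lemma row_nz_meq (A B : mat) n i : meq A B -> row_nz A n i -> row_nz B n i.
Proof. by case=> E11 E12 E21 E22 [h nz]; exists h; rewrite -E11 -E12 -E21 -E22. Qed.

Lemma vanish_at_row_nz M n i : vanish_at M n -> ~ row_nz M n i.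
Proof. by case=> Z11 Z12 Z21 Z22 [h]; case: i; rewrite ?Z11 ?Z12 ?Z21 ?Z22 eqxx. Qed.

End TopDegree.

Section RhoInjective.
Variables (F G : groupType) (ltF : F -> F -> Prop) (ltG : G -> G -> Prop).
Hypotheses (HF : is_ordering (fun x y : F => (x * y)%g) ltF)
  (HG : is_ordering (fun x y : G => (x * y)%g) ltG).
Local Notation mat := (mat F G).
Local Notation letter := (letter F G).
Local Notation L := (@rho_letter F G).

Lemma pcoef_translate_neq0 (p : pol F G) n c h0 :
  pcoef p n h0 != 0 -> c != 1%g -> exists h, pcoef p n (c^-1 * h)%g - pcoef p n h != 0.
Proof.
move=> nz0; apply: (translate_sub_neq0 (lex_irr HF HG) (lex_trans HF HG)
  (lex_total HF HG) (lex_mull HF HG) (lex_mulr HF HG) (@pcoef_supp _ _ p n)).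
by exists h0.
Qed.

Lemma ltr_mmul_top (x : letter) (M : mat) n :
  nontriv x -> vanish_at M n.+1 -> row_nz M n (side x) ->
  row_nz (mmul (L x) M) n.+1 (~~ side x) /\ ~ row_nz (mmul (L x) M) n.+1 (side x).
Proof.
move=> ntx [Y11 Y12 Y21 Y22] [h0 nz0].
case: x ntx nz0 => [f|g] /= nt nz0.
- have c1 : (f, 1%g) != 1%g :> F * G by rewrite xpair_eqE negb_and nt.
  split; last by case=> h; have [_ _ -> ->] := coef_ltrF_mmul f M n.+1 h; rewrite Y21 Y22 eqxx.
  case/orP: nz0 => /pcoef_translate_neq0/(_ c1)[h nz]; exists h.
  + by have [-> _ _ _] := coef_ltrF_mmul f M n.+1 h; rewrite Y11 add0r nz.
  + by have [_ -> _ _] := coef_ltrF_mmul f M n.+1 h; rewrite Y12 add0r nz orbT.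
- have c1 : (1%g, g) != 1%g :> F * G by rewrite xpair_eqE negb_and nt orbT.
  split; last by case=> h; have [-> -> _ _] := coef_ltrG_mmul g M n.+1 h; rewrite Y11 Y12 eqxx.
  case/orP: nz0 => /pcoef_translate_neq0/(_ c1)[h nz]; exists h.
  + by have [_ _ -> _] := coef_ltrG_mmul g M n.+1 h; rewrite Y21 addr0 nz.
  + by have [_ _ _ ->] := coef_ltrG_mmul g M n.+1 h; rewrite Y22 addr0 nz orbT.
Qed.

Lemma rhow_top (x : letter) w : reduced (x :: w) ->
  row_nz (rhow (x :: w)) (size (x :: w)) (~~ side x) /\
  ~ row_nz (rhow (x :: w)) (size (x :: w)) (side x).
Proof.
elim: w x => [|y w IH] x; rewrite reduced_cons => /andP[/andP[ntx rw] sxy].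
  exact: ltr_mmul_top ntx (@rhow_deg _ _ [::] 1 isT) (mid_row_nz _ _ _).
rewrite [size _]/= rhow_cons; apply: (ltr_mmul_top ntx (rhow_deg (ltnSn _))).
by have [+ _] := IH y rw; case: (side x) (side y) sxy => [] [].
Qed.

Lemma rhow_row_nz (w : seq letter) : reduced w -> exists i, row_nz (rhow w) (size w) i.
Proof.
case: w => [_|x w /rhow_top[nz _]]; last by exists (~~ side x).
by exists false; apply: mid_row_nz.
Qed.

Lemma size_rhow_meq (u v : seq letter) :
  reduced v -> meq (rhow u) (rhow v) -> (size v <= size u)%N.
Proof.
move=> rv E; rewrite leqNgt; apply/negP => /rhow_deg/vanish_at_row_nz vu.
by have [i /(row_nz_meq (meq_sym E))] := rhow_row_nz rv; apply: vu.
Qed.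

Lemma rhow_inj (u v : seq letter) :
  reduced u -> reduced v -> meq (rhow u) (rhow v) -> u = v.
Proof.
elim: u v => [|a u IH] [|b v] ru rv E //.
- by have := size_rhow_meq rv E.
- by have := size_rhow_meq ru (meq_sym E).
have sz : size u = size v.
  by apply/eqP; rewrite eqn_leq; apply/andP; split;
    [exact: (size_rhow_meq ru (meq_sym E)) | exact: (size_rhow_meq rv E)].
have [sab|/negbTE sab] := eqVneq (side a) (side b); last first.
  have [+ _] := rhow_top ru; have [_] := rhow_top rv.
  have -> : ~~ side a = side b by case: (side a) (side b) sab => [] [].
  by rewrite /= sz => zb /(row_nz_meq E).
move: ru; rewrite reduced_cons => /andP[/andP[nta ru] _].
have E' : meq (rhow u) (rhow (push (ltr_inv a) (b :: v))).
  rewrite -{1}(push_ltr_invK u nta).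
  apply: meq_trans (rhow_push _ _) _; apply: meq_sym.
  exact: meq_trans (rhow_push _ _) (meq_mmul (meq_refl _) (meq_sym E)).
have uE := IH _ ru (push_reduced _ rv) E'.
move: sz; rewrite uE size_push_ltr_inv // => /eqP; rewrite -{2}[size v]addn0 eqn_add2l.
by rewrite eqb0 negbK => /eqP <-; rewrite push_ltr_invK.
Qed.

End RhoInjective.

(** * The ordering of F * G and the map on orderings *)

Section FrakOrdering.
Variables (F G : groupType) (ltF : F -> F -> Prop) (ltG : G -> G -> Prop).
Hypotheses (HF : is_ordering (fun x y : F => (x * y)%g) ltF)
  (HG : is_ordering (fun x y : G => (x * y)%g) ltG).
Variable offd : bool.
Local Notation ecoef := (ecoef offd).

Lemma meq_msub_rho_mull (x y z : freeprod F G) :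
  meq (msub (rho (fp_mul z y)) (rho (fp_mul z x))) (mmul (rho z) (msub (rho y) (rho x))).
Proof. exact: meq_trans (meq_msub (rho_mul z y) (rho_mul z x)) (meq_sym (mmul_msubr _ _ _)). Qed.

Lemma meq_msub_rho_mulr (x y z : freeprod F G) :
  meq (msub (rho (fp_mul y z)) (rho (fp_mul x z))) (mmul (msub (rho y) (rho x)) (rho z)).
Proof. exact: meq_trans (meq_msub (rho_mul y z) (rho_mul x z)) (meq_sym (mmul_msubl _ _ _)). Qed.

Lemma frak_total (x y : freeprod F G) : x <> y ->
  frak ltF ltG offd x y \/ frak ltF ltG offd y x.
Proof.
move=> neq_xy; set D := msub (rho y) (rho x).
have nz_D : exists j n h, (j < 4)%N /\ ecoef D j n h != 0.
  apply: NNPP => zD; apply/neq_xy/esym/val_inj/(rhow_inj HF HG); try exact: valP.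
  apply: (@meq_ecoef _ _ offd) => j n h j4; apply/eqP; rewrite -subr_eq0 -ecoef_msub.
  by apply/negPn/negP => nz; apply: zD; exists j, n, h.
have [P|P] := lowest_pos_total (lex_irr HF HG) (lex_trans HF HG) (@ecoef_supp _ _ offd D)
  nz_D; [left|right]; apply/mposP => //.
by apply: eq_lowest_pos P => j n h; rewrite !ecoef_msub opprB.
Qed.

Lemma frak_ordering : is_ordering (@fp_mul F G) (frak ltF ltG offd).
Proof.
split=> [x|x y z|x y|x y z|x y z].
- move/mposP=> [n [k [_ _ _ /lead_pos_neq0[h]]]].
  by rewrite ecoef_msub subrr eqxx.
- move=> /mposP Pxy /mposP Pyz; apply/mposP.
  apply: eq_lowest_pos (lowest_posD (lex_trans HF HG) (lex_total HF HG) Pyz Pxy).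
  by move=> j n h; rewrite !ecoef_msub addrA subrK.
- exact: frak_total.
- by move=> P; apply: mpos_meq (meq_sym (meq_msub_rho_mull x y z)) (mpos_mull HF HG (val z) P).
- by move=> P; apply: mpos_meq (meq_sym (meq_msub_rho_mulr x y z)) (mpos_mulr HF HG (val z) P).
Qed.

End FrakOrdering.

Section FrakLetters.
Variables (F G : groupType) (ltF : F -> F -> Prop) (ltG : G -> G -> Prop).
Hypotheses (HF : is_ordering (fun x y : F => (x * y)%g) ltF)
  (HG : is_ordering (fun x y : G => (x * y)%g) ltG).
Variable offd : bool.

Lemma ecoef_ltrF_word (f : F) (nf : nontriv (inl f : letter F G)) j h :
  ecoef offd (msub (rho (ltr_word nf)) (rho (fp_one F G))) j 0 h =
  if j == 0%N then (h == (f, 1%g))%:R - (h == 1%g)%:R else 0.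
Proof.
rewrite ecoef_msub /ecoef /entries /rho /=.
have [E11 E12 E21 E22] := coef_ltrF_mmul f (mid F G) 0 h.
have [M11 M12 M21 M22] := pcoef_mid0 h; have [N11 N12 _ _] := pcoef_mid0 ((f, 1%g)^-1 * h)%g.
by case: offd; do 4?[case: j => [|j]] => /=;
  rewrite ?E11 ?E12 ?E21 ?E22 ?M11 ?M12 ?M21 ?M22 ?N11 ?N12 ?addr0 ?subrr ?mulVg_eq1
    ?nth_nil ?pcoef_nil.
Qed.

Lemma ecoef_ltrG_word (g : G) (ng : nontriv (inr g : letter F G)) j h :
  ecoef offd (msub (rho (ltr_word ng)) (rho (fp_one F G))) j 0 h =
  if j == 1%N then (h == (1%g, g))%:R - (h == 1%g)%:R else 0.
Proof.
rewrite ecoef_msub /ecoef /entries /rho /=.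
have [E11 E12 E21 E22] := coef_ltrG_mmul g (mid F G) 0 h.
have [M11 M12 M21 M22] := pcoef_mid0 h; have [_ _ N21 N22] := pcoef_mid0 ((1%g, g)^-1 * h)%g.
by case: offd; do 4?[case: j => [|j]] => /=;
  rewrite ?E11 ?E12 ?E21 ?E22 ?M11 ?M12 ?M21 ?M22 ?N21 ?N22 ?add0r ?subrr ?mulVg_eq1
    ?nth_nil ?pcoef_nil.
Qed.

Lemma lex1_pairF (f : F) : lexlt ltF ltG 1%g (f, 1%g) <-> ltF 1%g f.
Proof. by case: HG => irrG _ _ _ _; split=> [[//|[_ /irrG]]|]; last by left. Qed.

Lemma lex1_pairG (g : G) : lexlt ltF ltG 1%g (1%g, g) <-> ltG 1%g g.
Proof. by case: HF => irrF _ _ _ _; split=> [[/irrF|[]]|] //; right. Qed.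

Lemma frak_ltrF (f : F) (nf : nontriv (inl f : letter F G)) :
  frak ltF ltG offd (fp_one F G) (ltr_word nf) <-> ltF 1%g f.
Proof.
have neq_f1 : (f, 1%g) != 1%g :> F * G by move: nf; rewrite /= xpair_eqE negb_and => ->.
have E0 := ecoef_ltrF_word nf 0.
rewrite /frak mposP (@lowest_pos_at0 _ _ _ 0%N) //; last first.
  by exists (f, 1%g); rewrite E0 /= eqxx (negbTE neq_f1) subr0 oner_eq0.
rewrite -lex1_pairF.
rewrite -(lead_pos_dirac_sub (lex_irr HF HG) (lex_trans HF HG) (lex_total HF HG) neq_f1).
by split; apply: eq_lead_pos => h; rewrite E0.
Qed.

Lemma frak_ltrG (g : G) (ng : nontriv (inr g : letter F G)) :
  frak ltF ltG offd (fp_one F G) (ltr_word ng) <-> ltG 1%g g.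
Proof.
have neq_g1 : (1%g, g) != 1%g :> F * G.
  by move: ng; rewrite /= xpair_eqE negb_and => ->; rewrite orbT.
have E1 := ecoef_ltrG_word ng.
rewrite /frak mposP (@lowest_pos_at0 _ _ _ 1%N) //; first last.
- by exists (1%g, g); rewrite E1 /= eqxx (negbTE neq_g1) subr0 oner_eq0.
- by case=> // h _; rewrite E1.
rewrite -lex1_pairG.
rewrite -(lead_pos_dirac_sub (lex_irr HF HG) (lex_trans HF HG) (lex_total HF HG) neq_g1).
by split; apply: eq_lead_pos => h; rewrite E1.
Qed.

End FrakLetters.

Section OrderingSpace.
Variable T : groupType.
Local Notation ord := (ordering (fun x y : T => (x * y)%g)).

Lemma ordering_shift (lt : T -> T -> Prop) a b :
  is_ordering (fun x y : T => (x * y)%g) lt -> lt a b <-> lt 1%g (a^-1 * b)%g.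
Proof.
case=> _ _ _ lt_mull _; split=> [/(lt_mull _ _ a^-1%g)|/(lt_mull _ _ a)].
  by rewrite mulVg.
by rewrite mulg1 mulVKg.
Qed.

Lemma ordering_eq (o o' : ord) :
  (forall t, t != 1%g -> proj1_sig o 1%g t <-> proj1_sig o' 1%g t) -> o = o'.
Proof.
case: o o' => lt H [lt' H'] /= pos_eq.
have eq_lt : lt = lt'.
  apply: functional_extensionality => a; apply: functional_extensionality => b.
  apply: propositional_extensionality; rewrite (ordering_shift _ _ H) (ordering_shift _ _ H').
  have [->|/pos_eq //] := eqVneq (a^-1 * b)%g 1%g.
  by case: H H' => irr _ _ _ _ [irr' _ _ _ _]; split=> [/irr|/irr'].
by subst lt'; congr exist; apply: proof_irrelevance.
Qed.

Lemma ordering_nbhd (o : ord) (P : seq (T * T)) :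
  exists S, basic_open 1%g S o /\ forall o' : ord, basic_open 1%g S o' ->
    forall a b, (a, b) \in P -> proj1_sig o a b -> proj1_sig o' a b.
Proof.
elim: P => [|[a b] P [S [oS S_pres]]]; first by exists [::]; split=> // o' _ a b.
have [lt_ab|nlt_ab] := classic (proj1_sig o a b); last first.
  exists S; split=> // o' o'S a' b'; rewrite inE => /predU1P[[-> ->] //|].
  exact: S_pres.
exists ((a^-1 * b)%g :: S); split=> [s [<-|/oS //]|o' o'S a' b'].
  by rewrite -ordering_shift //; case: o lt_ab {oS S_pres}.
rewrite inE => /predU1P[[-> ->] _|]; last by apply: S_pres => s Ss; apply: o'S; right.
by rewrite (ordering_shift _ _ (proj2_sig o')); apply: o'S; left.
Qed.

End OrderingSpace.

Section FrakTopology.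
Variables (F G : groupType) (offd : bool).
Local Notation ordF := (ordering (fun x y : F => (x * y)%g)).
Local Notation ordG := (ordering (fun x y : G => (x * y)%g)).

Lemma lexlt_transfer (ltF ltF' : F -> F -> Prop) (ltG ltG' : G -> G -> Prop)
    (s : seq (F * G)) :
  {in [seq h.1 | h <- s] &, forall a b, ltF a b -> ltF' a b} ->
  {in [seq h.2 | h <- s] &, forall a b, ltG a b -> ltG' a b} ->
  {in s &, forall x y, lexlt ltF ltG x y -> lexlt ltF' ltG' x y}.
Proof.
move=> tF tG x y xs ys [l|[e l]]; [left|right].
- by apply: tF l; apply: map_f.
- by split=> //; apply: tG l; apply: map_f.
Qed.

Lemma frak_transfer (o1 o1' : ordF) (o2 o2' : ordG) x y :
  let s := msupp (msub (rho y) (rho x)) in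
  {in [seq h.1 | h <- s] &, forall a b, proj1_sig o1 a b -> proj1_sig o1' a b} ->
  {in [seq h.2 | h <- s] &, forall a b, proj1_sig o2 a b -> proj1_sig o2' a b} ->
  frak (proj1_sig o1) (proj1_sig o2) offd x y ->
  frak (proj1_sig o1') (proj1_sig o2') offd x y.
Proof.
case: o1 o1' o2 o2' => [lt1 H1] [lt1' H1'] [lt2 H2] [lt2' H2'] s /= t1 t2 /mposP P.
apply/mposP; apply: lowest_pos_transfer (lexlt_transfer t1 t2) P.
- exact: lex_total.
- exact: lex_irr.
- exact: lex_trans.
- exact: ecoef_supp.
Qed.

Lemma In_flatten_map (A : Type) (B : eqType) (f : A -> seq B) (S : seq A) s :
  List.In s S -> {subset f s <= flatten [seq f x | x <- S]}.
Proof.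
elim: S => [//|x S IH] /= [->|/IH sub] y fy; rewrite mem_cat ?fy //.
by rewrite sub ?orbT.
Qed.

Lemma frak_nbhd (o1 : ordF) (o2 : ordG) (S : seq (freeprod F G)) :
  exists S1 S2, [/\ basic_open 1%g S1 o1, basic_open 1%g S2 o2 &
    forall (q1 : ordF) (q2 : ordG), basic_open 1%g S1 q1 -> basic_open 1%g S2 q2 ->
    forall s, List.In s S -> frak (proj1_sig o1) (proj1_sig o2) offd (fp_one F G) s ->
    frak (proj1_sig q1) (proj1_sig q2) offd (fp_one F G) s].
Proof.
pose supp := flatten [seq msupp (msub (rho s) (rho (fp_one F G))) | s <- S].
have [S1 [o1S1 S1_pres]] := ordering_nbhd o1 [seq (x.1, y.1) | x <- supp, y <- supp].
have [S2 [o2S2 S2_pres]] := ordering_nbhd o2 [seq (x.2, y.2) | x <- supp, y <- supp].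
exists S1, S2; split=> // q1 q2 q1S1 q2S2 s Ss; apply: frak_transfer.
- move=> a b /mapP[x xs ->] /mapP[y ys ->]; apply: S1_pres q1S1 _ _ _.
  by apply: (allpairs_f (fun x y : F * G => (x.1, y.1))); apply: In_flatten_map Ss _ _.
- move=> a b /mapP[x xs ->] /mapP[y ys ->]; apply: S2_pres q2S2 _ _ _.
  by apply: (allpairs_f (fun x y : F * G => (x.2, y.2))); apply: In_flatten_map Ss _ _.
Qed.

End FrakTopology.

Definition frak_map (F G : groupType) (offd : bool)
    (p : ordering (fun x y : F => (x * y)%g) * ordering (fun x y : G => (x * y)%g)) :
    ordering (@fp_mul F G) :=
  exist _ (frak (proj1_sig p.1) (proj1_sig p.2) offd)
    (frak_ordering (proj2_sig p.1) (proj2_sig p.2) offd).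

Theorem theorem7p2 (F G : groupType) (offd : bool) :
  exists Phi : ordering (fun x y : F => (x * y)%g) *
               ordering (fun x y : G => (x * y)%g) ->
               ordering (@fp_mul F G),
    (forall p : ordering (fun x y : F => (x * y)%g) *
                ordering (fun x y : G => (x * y)%g),
        proj1_sig (Phi p) = frak (proj1_sig p.1) (proj1_sig p.2) offd) /\
    ord_continuous 1%g 1%g (@fp_one F G) Phi /\
    injective Phi.
Proof.
exists (frak_map offd); split=> //; split.
- move=> U U_open [o1 o2] /U_open[S [oS S_U]].
  have [S1 [S2 [o1S1 o2S2 S12_pres]]] := frak_nbhd offd o1 o2 S.
  exists S1, S2; split=> //; split=> // [[q1 q2]] /= q1S1 q2S2.
  by apply: S_U => s Ss; apply: S12_pres (oS s Ss).
- move=> [o1 o2] [o1' o2'] /(congr1 (@proj1_sig _ _)) /= frak_eq.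
  move: (proj2_sig o1) (proj2_sig o2) (proj2_sig o1') (proj2_sig o2') => HF HG HF' HG'.
  congr pair; apply: ordering_eq => t nt.
  + have nt' : nontriv (inl t : letter F G) by [].
    by rewrite -(frak_ltrF HF HG offd nt') -(frak_ltrF HF' HG' offd nt') frak_eq.
  + have nt' : nontriv (inr t : letter F G) by [].
    by rewrite -(frak_ltrG HF HG offd nt') -(frak_ltrG HF' HG' offd nt') frak_eq.
Qed.
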